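(* For every prime $p\geq 2$, $SD(\mathbb{Q}_p)=\{\mathrm{id}\}$.
   Context: $\mathbb{Q}_p$ denotes the field of $p$-adic numbers. For fields $\mathbb{F},\widetilde{\mathbb{F}}$, a map $f:\mathbb{F}\to\widetilde{\mathbb{F}}$ is called an SD-map if for all $x\neq y$ in $\mathbb{F}$ one has $f(x)\neq f(y)$ and \[ f\left(\frac{x+y}{x-y}\right)=\frac{f(x)+f(y)}{f(x)-f(y)}. \] For a field $\mathbb{F}$, $SD(\mathbb{F})$ denotes the set of surjective SD-maps $f:\mathbb{F}\to\mathbb{F}$ (no continuity is assumed). *)

From HB Require Import structures.
From mathcomp Require Import all_boot all_algebra.
From mathcomp Require Import boolp.
From mathcomp Require Import zify.
Set Implicit Arguments.
Unset Strict Implicit.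
Unset Printing Implicit Defensive.
Import GRing.Theory Num.Theory.
Local Open Scope ring_scope.

Section PadicIntegers.
Variable p : nat.

(* The base prime: equals p whenever p is prime (pdiv_id); the detour through
   pdiv only serves to make the construction total in p. *)
Definition padic_base : nat := pdiv (p.-2).+2.
Local Notation b := padic_base.

Lemma padic_base_prime : prime b.
Proof. exact: pdiv_prime. Qed.

Lemma padic_base_gt1 : (1 < b)%N.
Proof. exact: prime_gt1 padic_base_prime. Qed.

Definition zpmod (n : nat) (a : int) : int := (a %% (b ^ n)%:Z)%Z.

Definition padic_coherent (x : nat -> int) := forall n, x n = zpmod n (x n.+1).

Record padic_int := PadicInt { pval : nat -> int; pvalP : padic_coherent pval }.

Lemma padic_eq (x y : padic_int) : pval x =1 pval y -> x = y.
Proof.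
case: x y => [x hx] [y hy] /= /funext e; subst y.
by rewrite (Prop_irrelevance hx hy).
Qed.

HB.instance Definition _ := gen_eqMixin padic_int.
HB.instance Definition _ := gen_choiceMixin padic_int.

Lemma zpmod_mod n a : zpmod n (zpmod n a) = zpmod n a.
Proof. by rewrite /zpmod modz_mod. Qed.

Lemma zpmodS_k n k a : zpmod n (zpmod (n + k) a) = zpmod n a.
Proof.
rewrite /zpmod; apply/eqP; rewrite eqz_mod_dvd.
have -> : (a %% (b ^ (n + k))%:Z)%Z - a = - ((a %/ (b ^ (n + k))%:Z)%Z * (b ^ (n + k))%:Z).
  by rewrite {2}(divz_eq a (b ^ (n + k))%:Z) opprD addrCA subrr addr0.
rewrite -mulNr; apply: dvdz_mull.
by rewrite /dvdz !absz_nat expnD; apply: dvdn_mulr.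
Qed.

Lemma zpmodS n a : zpmod n (zpmod n.+1 a) = zpmod n a.
Proof. by rewrite -addn1 zpmodS_k. Qed.

Lemma pval_red (x : padic_int) n : zpmod n (pval x n) = pval x n.
Proof. by rewrite [in RHS](pvalP x) [in LHS](pvalP x) zpmod_mod. Qed.

Lemma zpmod0 n : zpmod n 0 = 0.
Proof. by rewrite /zpmod mod0z. Qed.

Lemma coh2 (f : int -> int -> int) :
  (forall n a c, zpmod n (f (zpmod n a) (zpmod n c)) = zpmod n (f a c)) ->
  forall x y : padic_int, padic_coherent (fun n => zpmod n (f (pval x n) (pval y n))).
Proof.
move=> hf x y n /=.
by rewrite zpmodS (pvalP x n) (pvalP y n) hf.
Qed.

Lemma coh1 (f : int -> int) :
  (forall n a, zpmod n (f (zpmod n a)) = zpmod n (f a)) ->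
  forall x : padic_int, padic_coherent (fun n => zpmod n (f (pval x n))).
Proof. by move=> hf x n /=; rewrite zpmodS (pvalP x n) hf. Qed.

Lemma coh0 (c : int) : padic_coherent (fun n => zpmod n c).
Proof. by move=> n; rewrite zpmodS. Qed.

Definition pzero := PadicInt (coh0 0).
Definition pone := PadicInt (coh0 1).
Definition popp x := PadicInt (@coh1 (fun a => - a)
  (fun n a => modzNm a (b ^ n)%:Z) x).
Definition padd x y := PadicInt (@coh2 (fun a c => a + c)
  (fun n a c => modzDm a c (b ^ n)%:Z) x y).
Definition pmul x y := PadicInt (@coh2 (fun a c => a * c)
  (fun n a c => modzMm a c (b ^ n)%:Z) x y).

Lemma paddA : associative padd.
Proof.
move=> x y z; apply: padic_eq => n /=; rewrite /zpmod.
by rewrite modzDml modzDmr addrA.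
Qed.

Lemma paddC : commutative padd.
Proof. by move=> x y; apply: padic_eq => n /=; rewrite addrC. Qed.

Lemma padd0 : left_id pzero padd.
Proof.
move=> x; apply: padic_eq => n /=.
by rewrite zpmod0 add0r pval_red.
Qed.

Lemma paddN : left_inverse pzero popp padd.
Proof.
move=> x; apply: padic_eq => n /=; rewrite /zpmod.
by rewrite modzDml addNr.
Qed.

HB.instance Definition _ := GRing.isZmodule.Build padic_int paddA paddC padd0 paddN.

Lemma pmulA : associative pmul.
Proof.
move=> x y z; apply: padic_eq => n /=; rewrite /zpmod.
by rewrite modzMml modzMmr mulrA.
Qed.

Lemma pmulC : commutative pmul.
Proof. by move=> x y; apply: padic_eq => n /=; rewrite mulrC. Qed.

Lemma pmul1 : left_id pone pmul.
Proof.
move=> x; apply: padic_eq => n /=.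
by rewrite /zpmod modzMml mul1r -/(zpmod n _) pval_red.
Qed.

Lemma pmulDl : left_distributive pmul padd.
Proof.
move=> x y z; apply: padic_eq => n /=; rewrite /zpmod.
by rewrite modzMml modzDm mulrDl.
Qed.

Lemma pone_neq0 : pone != pzero.
Proof.
apply/eqP => /(congr1 (fun x => pval x 1)) /=.
rewrite /zpmod expn1 mod0z modz_small //.
by rewrite ler01 /= ltz_nat padic_base_gt1.
Qed.

HB.instance Definition _ :=
  GRing.Zmodule_isComNzRing.Build padic_int pmulA pmulC pmul1 pmulDl pone_neq0.

Definition punit : {pred padic_int} := fun x => `[< exists y, y * x == 1 >].
Definition pinv (x : padic_int) : padic_int :=
  match pselect (exists y, y * x == 1) with
  | left h => xchoose h
  | right _ => x
  end.

Lemma pmulVx : {in punit, left_inverse 1 pinv *%R}.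
Proof.
move=> x hx; rewrite /pinv.
case: pselect => [h'|//]; first exact/eqP/(xchooseP h').
by move=> nh; exfalso; apply: nh; apply/asboolP.
Qed.

Lemma punitPl x y : y * x = 1 -> punit x.
Proof. by move=> e; apply/asboolP; exists y; rewrite e. Qed.

Lemma pinv_out : {in [predC punit], pinv =1 id}.
Proof.
move=> x hx; rewrite /pinv; case: pselect => // h.
by exfalso; move: hx; rewrite inE /= => /negP; apply; apply/asboolP.
Qed.

HB.instance Definition _ :=
  GRing.ComNzRing_hasMulInverse.Build padic_int pmulVx punitPl pinv_out.

Lemma pval_mul (x y : padic_int) n : pval (x * y) n = zpmod n (pval x n * pval y n).
Proof. by []. Qed.

Lemma pval_zero n : pval (0 : padic_int) n = 0.
Proof. by rewrite /= /zpmod mod0z. Qed.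

Lemma pval_down (x : padic_int) a k : pval x a = zpmod a (pval x (a + k)).
Proof.
elim: k => [|k IH]; first by rewrite addn0 pval_red.
by rewrite IH (pvalP x (a + k)) addnS -addn1 -addnA zpmodS_k.
Qed.

Lemma pneq0 (x : padic_int) : x != 0 -> exists a, pval x a != 0.
Proof.
move=> /eqP nx; apply: contrapT => h; apply: nx; apply: padic_eq => n.
rewrite pval_zero; apply/eqP; apply: contrapT => hn; apply: h; exists n; exact/negP.
Qed.

Lemma padic_idomain : GRing.integral_domain_axiom padic_int.
Proof.
move=> x y xy0; case: (boolP ((x == 0) || (y == 0))) => //; rewrite negb_or => /andP[/pneq0[a ha] /pneq0[c hc]].
have ndiv (z : padic_int) d k : pval z d != 0 ->
    ~~ (b ^ d %| `|pval z (d + k)|)%N.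
  move=> hz; apply: contra hz => dv.
  rewrite (pval_down z d k) /zpmod; apply/eqP/dvdz_mod0P.
  by rewrite /dvdz absz_nat.
have hx := ndiv x a c ha; have hy := ndiv y c a hc.
have := congr1 (fun z => pval z (a + c)) xy0.
rewrite /= zpmod0 /zpmod => /dvdz_mod0P; rewrite /dvdz absz_nat unfold_in abszM => dv.
rewrite addnC in hy.
set X := `|pval x (a + c)|%N in hx dv; set Y := `|pval y (a + c)|%N in hy dv.
have Xp : (0 < X)%N by rewrite lt0n; apply: contra hx => /eqP ->; rewrite dvdn0.
have Yp : (0 < Y)%N by rewrite lt0n; apply: contra hy => /eqP ->; rewrite dvdn0.
have pb := padic_base_prime.
move: hx hy dv; rewrite !pfactor_dvdn ?muln_gt0 ?Xp ?Yp // lognM // -!ltnNge.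
move=> h1 h2 h3; lia.
Qed.

HB.instance Definition _ := GRing.ComUnitRing_isIntegral.Build padic_int padic_idomain.

End PadicIntegers.

Definition Qp (p : nat) : fieldType := {fraction (padic_int p)}.

Definition SD_map (F G : fieldType) (f : F -> G) : Prop :=
  forall x y : F, x != y ->
    f x != f y /\ f ((x + y) / (x - y)) = (f x + f y) / (f x - f y).

Definition SD (F : fieldType) (f : F -> F) : Prop :=
  SD_map f /\ (forall z : F, exists x : F, f x = z).

(* An SD-map of a field of characteristic other than 2, 3 and 5 is pinned down
   by evaluating its functional equation at well-chosen points: it fixes 0, 1, -1
   and 2, it is multiplicative, and then additive, so it is an injective ring
   endomorphism.  On Q_p every ring endomorphism g is the identity.  Take an
   exponent q >= 2 prime to p; by Hensel's lemma z lies in Z_p iff 1 + p z^q is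
   a q-th power in Q_p, a property that g preserves.  So g maps Z_p into itself,
   and writing a = a_n + p^n c with a_n an integer and c in Z_p shows
   g(a) = a mod p^n for all n; hence g fixes Z_p and thus its fraction field. *)

From HB Require Import structures.
From mathcomp Require Import all_boot all_algebra.
From mathcomp Require Import ring zify boolp.
Import GRing.Theory Num.Theory.
Local Open Scope ring_scope.
Set Implicit Arguments.
Unset Strict Implicit.

Lemma lincomb1_eq (R : comPzRingType) (c a b L M : R) :
  a = b -> L - M = c * (a - b) -> L = M.
Proof. by move=> -> /eqP; rewrite subrr mulr0 subr_eq0 => /eqP. Qed.
Arguments lincomb1_eq {R} c {a b L M}.

Lemma lincomb2_eq (R : comPzRingType) (c1 c2 a1 b1 a2 b2 L M : R) :
  a1 = b1 -> a2 = b2 -> L - M = c1 * (a1 - b1) + c2 * (a2 - b2) -> L = M.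
Proof. by move=> -> -> /eqP; rewrite !subrr !mulr0 addr0 subr_eq0 => /eqP. Qed.
Arguments lincomb2_eq {R} c1 c2 {a1 b1 a2 b2 L M}.

Section SDMap.
Variable F : fieldType.
Hypotheses (F2 : 2%:R != 0 :> F) (F3 : 3%:R != 0 :> F) (F5 : 5%:R != 0 :> F).

Lemma oner_neqN1 : (1 : F) != -1.
Proof. by apply: contra F2 => /eqP e; rewrite -[2%:R]/(1 + 1 : F) {1}e addNr. Qed.

Lemma cayley_inj (a b : F) : a != 1 -> b != 1 ->
  (a + 1) / (a - 1) = (b + 1) / (b - 1) -> a = b.
Proof.
move=> a1 b1 /eqP; rewrite eqr_div ?subr_eq0 // => /eqP e.
have : 2%:R * (a - b) = 0 by apply: (lincomb1_eq (-1) e); ring.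
by move/eqP; rewrite mulf_eq0 (negbTE F2) subr_eq0 => /eqP.
Qed.

Lemma divf_eq1 (a b : F) : b != 0 -> (a / b == 1) = (a == b).
Proof. by move=> b0; rewrite -(inj_eq (mulIf b0)) divfK // mul1r. Qed.

Variable f : F -> F.
Hypothesis fSD : SD_map f.

Lemma sd_neq x y : x != y -> f x != f y.
Proof. by move=> /fSD []. Qed.

Lemma sdE x y : x != y -> f ((x + y) / (x - y)) = (f x + f y) / (f x - f y).
Proof. by move=> /fSD []. Qed.

Lemma sd_inj : injective f.
Proof. by move=> x y e; case: (eqVneq x y) => // /sd_neq; rewrite e eqxx. Qed.

Lemma sd_at0 x : x != 0 -> f 1 * (f x - f 0) = f x + f 0.
Proof.
move=> x0; rewrite -(divff x0) -[x in x / _]addr0 -[x in _ / x]subr0 sdE //.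
by rewrite divfK // subr_eq0; apply: sd_neq.
Qed.

Lemma sd1 : f 1 = 1.
Proof.
have e1 := sd_at0 (oner_neq0 F).
have e2 : f 1 * (f (-1) - f 0) = f (-1) + f 0 by apply: sd_at0; rewrite oppr_eq0 oner_neq0.
have : (f 1 - 1) * (f 1 - f (-1)) = 0 by apply: (lincomb2_eq 1 (-1) e1 e2); ring.
move/eqP; rewrite mulf_eq0 !subr_eq0 (negbTE (sd_neq oner_neqN1)) orbF.
by move/eqP.
Qed.

Lemma sd0 : f 0 = 0.
Proof.
have e := sd_at0 (oner_neq0 F); rewrite sd1 mul1r in e.
have : 2%:R * f 0 = 0 by apply: (lincomb1_eq (-1) e); ring.
by move/eqP; rewrite mulf_eq0 (negbTE F2) => /eqP.
Qed.

Lemma sd_neq0 x : x != 0 -> f x != 0.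
Proof. by move=> /sd_neq; rewrite sd0. Qed.

Lemma sdN1 : f (-1) = -1.
Proof.
have := @sdE 0 1; rewrite eq_sym oner_neq0 sd0 sd1 => /(_ isT).
by rewrite !add0r !mul1r invrN invr1.
Qed.

Lemma sd_div x y : f (x / y) = f x / f y.
Proof.
have [->|y0] := eqVneq y 0; first by rewrite invr0 !mulr0 sd0 invr0 mulr0.
have [->|xy] := eqVneq x y; first by rewrite !divff ?sd_neq0 // sd1.
have fy0 := sd_neq0 y0.
have xy1 : x / y != 1 by rewrite divf_eq1.
apply: cayley_inj; [by rewrite -sd1 sd_neq | by rewrite divf_eq1 // sd_neq |].
have := sdE xy1; rewrite sd1 => <-.
have -> : (x / y + 1) / (x / y - 1) = (x + y) / (x - y).
  by field; rewrite subr_eq0 xy y0.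
by rewrite sdE //; field; rewrite fy0 mulN1r subr_eq0 sd_neq.
Qed.

Lemma sdV x : f x^-1 = (f x)^-1.
Proof. by have := sd_div 1 x; rewrite sd1 !mul1r. Qed.

Lemma sdM x y : f (x * y) = f x * f y.
Proof. by have := sd_div x y^-1; rewrite invrK sdV invrK. Qed.

Lemma sdN x : f (- x) = - f x.
Proof. by rewrite -mulN1r sdM sdN1 mulN1r. Qed.

Lemma sd_step x : f (x + 1) * (f x - 1) = f (x - 1) * (f x + 1).
Proof.
have [->|x1] := eqVneq x 1; first by rewrite sd1 !subrr sd0 mulr0 mul0r.
have fx1 : f x != 1 by rewrite -sd1 sd_neq.
have := sdE x1; rewrite sd_div sd1 => /eqP.
by rewrite eqr_div ?sd_neq0 ?subr_eq0 // => /eqP ->; rewrite mulrC.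
Qed.

Lemma sd2 : f 2%:R = 2%:R.
Proof.
have two_neq1 : (2%:R : F) != 1 by rewrite -subr_eq0 (_ : 2%:R - 1 = 1) ?oner_neq0 //; ring.
have two_neqN1 : (2%:R : F) != -1 by rewrite -subr_eq0 (_ : 2%:R - -1 = 3%:R) //; ring.
set a := f 2%:R.
have a0 : a != 0 := sd_neq0 F2.
have a1 : a - 1 != 0 by rewrite subr_eq0 -sd1 sd_neq.
have aa1 : a * a - 1 != 0.
  rewrite (_ : a * a - 1 = (a - 1) * (a + 1)); last by ring.
  by rewrite mulf_neq0 // addr_eq0 -sdN1 sd_neq.
have E2 := sd_step 2%:R; have E4 := sd_step (2%:R * 2%:R).
have E5 := sd_step (2%:R * 2%:R + 1).
rewrite (_ : 2%:R - 1 = 1) in E2; last by ring.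
rewrite (_ : 2%:R * 2%:R - 1 = 2%:R + 1) in E4; last by ring.
rewrite (_ : 2%:R * 2%:R + 1 - 1 = 2%:R * 2%:R) in E5; last by ring.
rewrite (_ : 2%:R * 2%:R + 1 + 1 = 2%:R * (2%:R + 1)) in E5; last by ring.
rewrite !sdM -/a sd1 mul1r in E2 E4 E5.
move: E2 E4 E5; set f3 := f (2%:R + 1); set f5 := f (2%:R * 2%:R + 1) => E2 E4 E5.
have ef3 : f3 = (a + 1) / (a - 1) by rewrite -E2 mulfK.
have ef5 : f5 = f3 * (a * a + 1) / (a * a - 1) by rewrite -E4 mulfK.
have {}E5 : f3 * (f5 - 1) = a * (f5 + 1) by apply: (mulfI a0); rewrite mulrA E5 mulrA.
(* With a = f 2, the step relation at 2, 4 and 5 forces (a - 2) (a^2 + 1) = 0,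
   and a^2 = -1 would mean f 4 = f (-1), i.e. 5 = 0. *)
have : (a - 2%:R) * (a * a + 1) * (-2%:R * a) = (a - 1) ^+ 3 * (f3 * (f5 - 1) - a * (f5 + 1)).
  by rewrite ef5 ef3; field; rewrite a1 aa1.
rewrite E5 subrr mulr0 => /eqP; rewrite !mulf_eq0 oppr_eq0 (negbTE F2) (negbTE a0) !orbF.
case/orP => [|/eqP a2N1]; first by rewrite subr_eq0 => /eqP.
have : f (2%:R * 2%:R) = f (-1) by rewrite sdM sdN1 -/a; apply: (lincomb1_eq 1 a2N1); ring.
move/sd_inj/eqP; rewrite -subr_eq0 (_ : 2%:R * 2%:R - -1 = 5%:R) ?(negbTE F5) //; ring.
Qed.

Lemma sd_sqrD1 x : f (x * x + 1) = f x * f x + 1.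
Proof.
have [->|x0] := eqVneq x 0; first by rewrite mulr0 add0r sd1 sd0 mulr0 add0r.
have [->|x1] := eqVneq x 1; first by rewrite mulr1 sd1 mulr1 (_ : 1 + 1 = 2%:R :> F) ?sd2.
set u := f x; set P := f (x + 1); set Q := f (x - 1); set W := f (x * x + 1).
have u0 : u != 0 := sd_neq0 x0.
have Q0 : Q != 0 by apply: sd_neq0; rewrite subr_eq0.
have x2 : 2%:R * x != 0 by rewrite mulf_neq0.
set X := (x * x + 1) / (2%:R * x).
have EX := sd_step X.
have eXp : X + 1 = (x + 1) * (x + 1) / (2%:R * x) by rewrite /X; field; rewrite F2 x0.
have eXm : X - 1 = (x - 1) * (x - 1) / (2%:R * x) by rewrite /X; field; rewrite F2 x0.
rewrite eXp eXm /X !sd_div !sdM sd2 -/P -/Q -/W -/u in EX.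
have E : P * P * (W - 2%:R * u) = Q * Q * (W + 2%:R * u).
  transitivity ((2%:R * u) ^+ 2 * (P * P / (2%:R * u) * (W / (2%:R * u) - 1))).
    by field; rewrite F2 u0.
  by rewrite EX; field; rewrite F2 u0.
have E1 := sd_step x; rewrite -/P -/Q -/u in E1.
have : Q * Q * (2%:R * 2%:R * u) * (W - (u * u + 1)) = 0.
  apply: (lincomb2_eq ((u - 1) ^+ 2) (- (W - 2%:R * u) * (P * (u - 1) + Q * (u + 1))) E E1).
  by ring.
move/eqP; rewrite !mulf_eq0 (negbTE F2) (negbTE u0) (negbTE Q0) /= subr_eq0.
by move/eqP.
Qed.

Lemma sd_sqrB1 s : f (s * s - 1) = f (s * s) - 1.
Proof.
set w := s * s.
have E := sd_step w; rewrite sd_sqrD1 -sdM -/w in E.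
have [e|ne] := eqVneq (f w + 1) 0.
  have fw : f w = f (-1) by rewrite sdN1; apply: (lincomb1_eq 1 e); ring.
  rewrite (sd_inj fw) sdN1 (_ : (-1 - 1 : F) = - 2%:R); last by ring.
  by rewrite sdN sd2; ring.
by apply: (mulIf ne); rewrite -E mulrC.
Qed.

Lemma sd_sum_sqr s t : f (s * s + t * t) = f s * f s + f t * f t.
Proof.
have [->|t0] := eqVneq t 0; first by rewrite !mulr0 !addr0 sd0 mulr0 addr0 sdM.
have ft0 := sd_neq0 t0.
rewrite (_ : s * s + t * t = (t * t) * ((s / t) * (s / t) + 1)); last by field.
by rewrite sdM sd_sqrD1 sd_div sdM; field.
Qed.

Lemma sd_diff_sqr s t : f (s * s - t * t) = f s * f s - f t * f t.
Proof.
have [->|t0] := eqVneq t 0; first by rewrite !mulr0 !subr0 sd0 mulr0 subr0 sdM.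
have ft0 := sd_neq0 t0.
rewrite (_ : s * s - t * t = (t * t) * ((s / t) * (s / t) - 1)); last by field.
by rewrite sdM sd_sqrB1 !sdM sdV; field.
Qed.

Lemma sdD1_sign x : f (x + 1) = f x + 1 \/ f (x + 1) = - (f x + 1).
Proof.
set u := f x; set P := f (x + 1); set Q := f (x - 1).
have e1 := sd_diff_sqr (x + 1) (x - 1).
rewrite (_ : (x + 1) * (x + 1) - (x - 1) * (x - 1) = 2%:R * 2%:R * x) in e1; last by ring.
rewrite !sdM sd2 -/u -/P -/Q in e1.
have e2 := sd_sum_sqr (x + 1) (x - 1).
rewrite (_ : (x + 1) * (x + 1) + (x - 1) * (x - 1) = 2%:R * (x * x + 1)) in e2; last by ring.
rewrite sdM sd_sqrD1 sd2 -/u -/P -/Q in e2.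
have : 2%:R * ((P - (u + 1)) * (P + (u + 1))) = 0.
  by apply: (lincomb2_eq (-1) (-1) e1 e2); ring.
move/eqP; rewrite !mulf_eq0 (negbTE F2) /= subr_eq0 addr_eq0.
by case/orP => /eqP; [left|right].
Qed.

Lemma sdD1 x : f (x + 1) = f x + 1.
Proof.
case: (sdD1_sign x) => // hP.
have [u0|u0] := eqVneq (f x) 0.
  by rewrite -sd0 in u0; rewrite (sd_inj u0) add0r sd1 sd0 add0r.
have [um|um] := eqVneq (f x + 1) 0; first by rewrite hP um oppr0.
have E := sd_step (x + 1); rewrite addrK hP in E.
case: (sdD1_sign (x + 1)) => h'; rewrite h' hP in E.
  have : 2%:R * f x * (f x + 1) = 0 by apply: (lincomb1_eq 1 E); ring.
  by move/eqP; rewrite !mulf_eq0 (negbTE F2) (negbTE u0) (negbTE um).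
have : 2%:R * f x = 0 by apply: (lincomb1_eq (-1) E); ring.
by move/eqP; rewrite !mulf_eq0 (negbTE F2) (negbTE u0).
Qed.

Lemma sdD x y : f (x + y) = f x + f y.
Proof.
have [->|y0] := eqVneq y 0; first by rewrite !addr0 sd0 addr0.
have fy0 := sd_neq0 y0.
rewrite (_ : x + y = y * (x / y + 1)); last by field.
by rewrite sdM sdD1 sd_div; field.
Qed.

Lemma SD_map_rmorphism : exists g : {rmorphism F -> F}, f = g.
Proof.
have fB : zmod_morphism f by move=> x y; rewrite sdD sdN.
pose g : {rmorphism F -> F} := HB.pack f (GRing.isZmodMorphism.Build F F f fB)
  (GRing.isMonoidMorphism.Build F F f (sd1, sdM)).
by exists g.
Qed.
End SDMap.

Lemma exprD_first_order (R : comPzRingType) (r s : R) q :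
  exists K, (r + s) ^+ q.+1 = r ^+ q.+1 + q.+1%:R * r ^+ q * s + s ^+ 2 * K.
Proof.
elim: q => [|q [K IH]]; first by exists 0; rewrite !expr1 expr0; ring.
exists (q.+1%:R * r ^+ q + (r + s) * K).
by rewrite exprS IH (exprS r q.+1) (exprS r q) -natr1; ring.
Qed.

Lemma dvdz_subXX (d a b : int) q : (d %| a - b)%Z -> (d %| a ^+ q - b ^+ q)%Z.
Proof.
case: q => [|q] h; first by rewrite !expr0 subrr dvdz0.
by rewrite subrXX dvdz_mulr.
Qed.

Local Notation "x %:F" := (tofrac x).

Lemma fraction_numden (R : idomainType) (z : {fraction R}) :
  exists a b : R, b != 0 /\ z = a%:F / b%:F.
Proof.
elim/quotW: z => x; have d0 := denom_ratioP x.
exists (frac x).1, (frac x).2; split=> //.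
apply: (@mulIf _ (frac x).2%:F); first by rewrite tofrac_eq0.
rewrite mulfVK ?tofrac_eq0 //; unlock tofrac; rewrite -[_ * _]/(FracField.mul _ _) !piE.
apply/eqmodP; rewrite /= FracField.equivfE /= /FracField.mulf.
by rewrite !numden_Ratio ?mulf_neq0 ?oner_eq0 // !mulr1 mulrC.
Qed.

Lemma clear_denoms_root (F : fieldType) (c d a b t : F) : d != 0 -> b != 0 ->
  c / d = 1 + t * (a / b) -> c * b = d * (b + t * a).
Proof. by move=> d0 b0 e; rewrite -[c](divfK d0) e; field. Qed.

Lemma clear_denoms_approx (F : fieldType) (e u n t c1 c2 : F) : u != 0 -> c2 != 0 ->
  e / u = n + t * (c1 / c2) -> (e - u * n) * c2 = t * (u * c1).
Proof. by move=> u0 c0 h; rewrite -[e](divfK u0) h; field. Qed.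

Section Padic.
Variable p : nat.
Hypothesis p_prime : prime p.
Local Notation R := (padic_int p).
Local Notation zpmod := (zpmod p).

Lemma padic_baseE : padic_base p = p.
Proof.
rewrite /padic_base; have := prime_gt1 p_prime.
by case: p p_prime => [|[|n]] //= pr _; rewrite pdiv_id.
Qed.

Lemma zpmodE n a : zpmod n a = (a %% (p ^ n)%:Z)%Z.
Proof. by rewrite /zpmod padic_baseE. Qed.

Lemma zpmod_eq0 n a : zpmod n a = 0 <-> ((p ^ n)%:Z %| a)%Z.
Proof. by rewrite zpmodE; split => /dvdz_mod0P. Qed.

Lemma zpmod_eq n a b : ((p ^ n)%:Z %| a - b)%Z -> zpmod n a = zpmod n b.
Proof. by move=> h; rewrite !zpmodE; apply/eqP; rewrite eqz_mod_dvd. Qed.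

Lemma dvdz_zpmod n a : ((p ^ n)%:Z %| zpmod n a - a)%Z.
Proof.
rewrite zpmodE {2}(divz_eq a (p ^ n)%:Z) opprD addrCA subrr addr0.
by rewrite rpredN dvdz_mull.
Qed.

Lemma zpmodBr n a b : zpmod n (a - zpmod n b) = zpmod n (a - b).
Proof. by rewrite !zpmodE -modzDmr modzNm modzDmr. Qed.

Lemma zpmod_le k n a : (k <= n)%N -> zpmod k (zpmod n a) = zpmod k a.
Proof. by move=> kn; rewrite -(subnKC kn) zpmodS_k. Qed.

Lemma pvalD (x y : R) n : pval (x + y) n = zpmod n (pval x n + pval y n).
Proof. by []. Qed.

Lemma pvalN (x : R) n : pval (- x) n = zpmod n (- pval x n).
Proof. by []. Qed.

Lemma pvalB (x y : R) n : pval (x - y) n = zpmod n (pval x n - pval y n).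
Proof. by rewrite pvalD pvalN !zpmodE modzDmr. Qed.

Lemma pval1 n : pval (1 : R) n = zpmod n 1.
Proof. by []. Qed.

Lemma pval_nat m n : pval (m%:R : R) n = zpmod n m%:Z.
Proof.
elim: m => [|m IH]; first by rewrite pval_zero zpmodE mod0z.
by rewrite -natr1 pvalD IH pval1 !zpmodE modzDm -addn1 PoszD.
Qed.

Lemma pval_int (k : int) n : pval (k%:~R : R) n = zpmod n k.
Proof.
case: k => m; first by rewrite pval_nat.
by rewrite NegzE mulrNz pvalN pval_nat !zpmodE modzNm.
Qed.

Lemma pvalX (x : R) k n : pval (x ^+ k) n = zpmod n (pval x n ^+ k).
Proof.
elim: k => [|k IH]; first by rewrite !expr0 pval1.
by rewrite exprS pval_mul IH !zpmodE modzMmr exprS.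
Qed.

Lemma pval_at0 (x : R) : pval x 0 = 0.
Proof. by rewrite -pval_red zpmodE expn0 modz1. Qed.

Lemma pval_le (x : R) k n : (k <= n)%N -> pval x k = zpmod k (pval x n).
Proof. by move=> kn; rewrite (pval_down x k (n - k)) subnKC. Qed.

Lemma pval_eq0_rep (x : R) k n a : (k <= n)%N -> pval x n = zpmod n a ->
  pval x k = 0 <-> ((p ^ k)%:Z %| a)%Z.
Proof. by move=> kn e; rewrite (pval_le x kn) e zpmod_le // zpmod_eq0. Qed.

Lemma pval_eq0_dvd (x : R) k n : (k <= n)%N ->
  pval x k = 0 <-> ((p ^ k)%:Z %| pval x n)%Z.
Proof. by move=> kn; apply: pval_eq0_rep kn (esym (pval_red x n)). Qed.

Lemma pval_eq0_le (x : R) k n : (k <= n)%N -> pval x n = 0 -> pval x k = 0.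
Proof. by move=> kn e; rewrite (pval_le x kn) e zpmodE mod0z. Qed.

Lemma pval_eq0D n (x y : R) : pval x n = 0 -> pval y n = 0 -> pval (x + y) n = 0.
Proof. by move=> hx hy; rewrite pvalD hx hy addr0 zpmodE mod0z. Qed.

Lemma pval_eq0N n (x : R) : pval x n = 0 -> pval (- x) n = 0.
Proof. by move=> hx; rewrite pvalN hx oppr0 zpmodE mod0z. Qed.

Lemma pval_eq0Ml n (x y : R) : pval y n = 0 -> pval (x * y) n = 0.
Proof. by move=> hy; rewrite pval_mul hy mulr0 zpmodE mod0z. Qed.

Lemma pval_eq0Mr n (x y : R) : pval x n = 0 -> pval (x * y) n = 0.
Proof. by rewrite mulrC; apply: pval_eq0Ml. Qed.

Lemma padic_eq0 (x : R) : (forall n, pval x n = 0) -> x = 0.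
Proof. by move=> h; apply: padic_eq => n; rewrite h pval_zero. Qed.

Lemma pval_unit_ndvd (u : R) n : (0 < n)%N -> pval u 1 != 0 -> ~~ (p %| `|pval u n|)%N.
Proof.
move=> n0; apply: contra => h; apply/eqP.
by rewrite (pval_le u n0) zpmod_eq0 expn1 dvdzE absz_nat.
Qed.

Lemma pval_eq0_cancel n (x u : R) : pval u 1 != 0 -> pval (x * u) n = 0 -> pval x n = 0.
Proof.
case: n => [|n] hu; first by move=> _; rewrite pval_at0.
move/(pval_eq0_rep (leqnn _) (pval_mul x u _)).
rewrite Gauss_dvdzl; first exact: (iffRL (pval_eq0_dvd x (leqnn _))).
rewrite coprimezE absz_nat coprime_pexpl // prime_coprime //.
exact: pval_unit_ndvd.
Qed.

Lemma pval_expp k n : pval ((p%:R : R) ^+ k) n = zpmod n (p ^ k)%:Z.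
Proof. by rewrite -natrX pval_nat. Qed.

Lemma padic_dvd_expp k (x : R) : pval x k = 0 -> exists y, x = (p%:R : R) ^+ k * y.
Proof.
move=> xk.
have dvd_x m : (k <= m)%N -> ((p ^ k)%:Z %| pval x m)%Z.
  by move=> km; apply/(pval_eq0_dvd x km).
pose d := (p ^ k)%:Z.
pose y n := zpmod n (pval x (n + k) %/ d)%Z.
have y_coh : padic_coherent p y.
  move=> n; rewrite /y zpmodS; apply: zpmod_eq.
  have d0 : d != 0 by rewrite /d eqz_nat expn_eq0 negb_and -lt0n prime_gt0.
  rewrite -(@dvdz_mul2r d _ _ d0) mulrBl !divzK ?dvd_x ?leq_addl //.
  by rewrite /d -PoszM -expnD addSn (pvalP x (n + k)) dvdz_zpmod.
exists (PadicInt y_coh); apply: padic_eq => n.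
rewrite pval_mul pval_expp /= /y !zpmodE modzMml modzMmr mulrC divzK ?dvd_x ?leq_addl //.
by rewrite -zpmodE -pval_down.
Qed.

Lemma padic_int_approx (x : R) n : exists c, x = (pval x n)%:~R + (p%:R : R) ^+ n * c.
Proof.
have [|c hc] := @padic_dvd_expp n (x - (pval x n)%:~R).
  by rewrite pvalB pval_int pval_red subrr zpmodE mod0z.
by exists c; rewrite -hc addrC subrK.
Qed.

Lemma dvdz_expp_logn k (a : int) : a != 0 -> ((p ^ k)%:Z %| a)%Z = (k <= logn p `|a|)%N.
Proof. by move=> a0; rewrite dvdzE absz_nat pfactor_dvdn // absz_gt0. Qed.

(* [has_val 0 u] says that u is a unit of Z_p. *)
Definition has_val i (x : R) := pval x i = 0 /\ pval x i.+1 != 0.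

Lemma has_valE (x : R) i n a : (i < n)%N -> pval x n = zpmod n a ->
  has_val i x <-> a != 0 /\ logn p `|a| = i.
Proof.
move=> iN e; rewrite /has_val.
have L1 := pval_eq0_rep (ltnW iN) e; have L2 := pval_eq0_rep iN e.
have [a0|a0] := eqVneq a 0.
  split=> [[_]|[]] //.
  by rewrite (iffRL L2) ?eqxx // a0 dvdz0.
rewrite !dvdz_expp_logn // in L1 L2.
split=> [[/L1 i_le /eqP i1_nle]|[_ li]].
  split=> //; apply/eqP; rewrite eqn_leq i_le andbT leqNgt.
  by apply/negP => /L2.
by subst i; split; [apply/L1 | apply/eqP => /L2; rewrite ltnn].
Qed.

Lemma has_valM i j (x y : R) : has_val i x -> has_val j y -> has_val (i + j) (x * y).
Proof.
have iN : (i < (i + j).+1)%N by lia.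
have jN : (j < (i + j).+1)%N by lia.
move=> /(has_valE iN (esym (pval_red x _))) [x0 xi].
move=> /(has_valE jN (esym (pval_red y _))) [y0 yj].
apply/(has_valE (ltnSn _) (pval_mul _ _ _)); split; first by rewrite mulf_neq0.
by rewrite abszM lognM ?absz_gt0 // xi yj.
Qed.

Lemma has_val_uniq i j (x : R) : has_val i x -> has_val j x -> i = j.
Proof.
move=> [xi xi1] [xj xj1]; apply/eqP; rewrite eqn_leq.
apply/andP; split; rewrite leqNgt; apply/negP => lt.
  by move/eqP: xj1; apply; apply: pval_eq0_le lt xi.
by move/eqP: xi1; apply; apply: pval_eq0_le lt xj.
Qed.

Lemma has_val_neq0 i (x : R) : has_val i x -> x != 0.
Proof. by case=> _; apply: contra => /eqP ->; rewrite pval_zero. Qed.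

Lemma has_val_exists (x : R) : x != 0 -> exists i, has_val i x.
Proof.
move=> /pneq0 ex; case: (ex_minnP ex) => -[|m]; first by rewrite pval_at0 // eqxx.
move=> xm m_min; exists m; split => //; apply/eqP; apply: contraT => /m_min.
by rewrite ltnn.
Qed.

Lemma has_valDr i (x y : R) : has_val i x -> pval y i.+1 = 0 -> has_val i (x + y).
Proof.
move=> [xi xi1] yi1; split; last by rewrite pvalD yi1 addr0 pval_red.
by apply: pval_eq0D => //; apply: pval_eq0_le yi1.
Qed.

Lemma has_val1 : has_val 0 (1 : R).
Proof.
split; first exact: pval_at0.
rewrite pval1 zpmodE // expn1 modz_small // ler01 ltz_nat prime_gt1 //.
Qed.

Lemma has_valX i k (x : R) : has_val i x -> has_val (i * k) (x ^+ k).
Proof.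
move=> h; elim: k => [|k IH]; first by rewrite muln0 expr0; exact: has_val1.
by rewrite exprS mulnS; apply: has_valM.
Qed.

Lemma has_val_p : has_val 1 (p%:R : R).
Proof.
split; first by rewrite pval_nat zpmodE expn1 modzz.
rewrite pval_nat zpmodE modz_small; first by rewrite eqz_nat -lt0n prime_gt0.
apply/andP; split=> //; rewrite ltz_nat -{1}(expn1 p) ltn_exp2l // prime_gt1 //.
Qed.

Lemma has_val_expp k : has_val k ((p%:R : R) ^+ k).
Proof. by rewrite -[k in has_val k _]mul1n; apply/has_valX/has_val_p. Qed.

Lemma hensel_step q r B m : ~~ (p %| q)%N -> ~~ (p %| `|r|)%N -> (0 < m)%N ->
  ((p ^ m)%:Z %| r ^+ q - B)%Z ->
  exists2 s, ((p ^ m)%:Z %| s)%Z & ((p ^ m.+1)%:Z %| (r + s) ^+ q - B)%Z.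
Proof.
case: q => [|q]; first by rewrite dvdn0.
move=> pq pr m0 hB; set P := (p ^ m)%:Z.
have /coprimezP[[u v] /= uv] : coprimez p%:Z (q.+1%:R * r ^+ q).
  rewrite coprimezE absz_nat abszM abszX natz absz_nat prime_coprime //.
  by rewrite Euclid_dvdM // Euclid_dvdX // negb_or pq /= negb_and pr.
set k := ((r ^+ q.+1 - B) %/ P)%Z.
have ek : k * P = r ^+ q.+1 - B := divzK hB.
set s := - k * v * P; exists s; first exact: dvdz_mull (dvdzz P).
have [K hK] := exprD_first_order r s q.
have -> : (r + s) ^+ q.+1 - B = s ^+ 2 * K + P * (k * u * p%:Z).
  by rewrite hK; apply: (lincomb2_eq (-1) (- k * P) ek uv); rewrite /s; ring.
apply: rpredD.
  apply: dvdz_mulr; rewrite /s /P exprMn dvdz_mull //.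
  by rewrite dvdzE abszX !absz_nat -expnM dvdn_exp2l //; lia.
by rewrite expnSr PoszM dvdz_mul // dvdz_mull.
Qed.

Section Lifting.
Variables (G : nat -> int -> Prop) (r1 : int).
Hypothesis G1 : G 1 r1.
Hypothesis G_lift : forall n r, G n.+1 r -> exists r', G n.+2 r' /\ zpmod n.+1 r' = r.

Fixpoint lift_seq n : {r | G n.+1 r} :=
  if n is m.+1 then
    let: exist r Gr := lift_seq m in
    let: exist r' (conj Gr' _) := cid (G_lift Gr) in exist _ r' Gr'
  else exist _ r1 G1.

Definition lift_val n : int := if n is m.+1 then sval (lift_seq m) else 0.

Lemma lift_val_coherent : padic_coherent p lift_val.
Proof.
case=> [|m] /=; first by rewrite zpmodE expn0 modz1.
by case: (lift_seq m) => r Gr; case: (cid (G_lift Gr)) => r' [].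
Qed.

Lemma padic_of_lifts : exists x : R, forall n, G n.+1 (pval x n.+1).
Proof. by exists (PadicInt lift_val_coherent) => n /=; case: (lift_seq n). Qed.
End Lifting.

Lemma hensel_root q (B c : R) : ~~ (p %| q)%N -> pval c 1 != 0 ->
  pval (B - c ^+ q) 1 = 0 -> exists x : R, x ^+ q = B.
Proof.
move=> pq c1 Bc.
pose G n (r : int) := [/\ zpmod n r = r, ((p ^ n)%:Z %| r ^+ q - pval B n)%Z
                         & zpmod 1 r = pval c 1].
have G1 : G 1 (pval c 1).
  split; [exact: pval_red | | exact: pval_red].
  move: Bc; rewrite pvalB pvalX zpmodBr => /zpmod_eq0.
  by rewrite -rpredN opprB.
have G_lift n r : G n.+1 r -> exists r', G n.+2 r' /\ zpmod n.+1 r' = r.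
  case=> r_red r_root r_c.
  have pr : ~~ (p %| `|r|)%N.
    apply: contra c1 => pr; rewrite -r_c; apply/eqP/zpmod_eq0.
    by rewrite expn1 dvdzE absz_nat.
  have r_root' : ((p ^ n.+1)%:Z %| r ^+ q - pval B n.+2)%Z.
    rewrite (_ : r ^+ q - _ = (r ^+ q - pval B n.+1) + (pval B n.+1 - pval B n.+2));
      last by ring.
    by rewrite rpredD // (pvalP B n.+1) dvdz_zpmod.
  have [s ps rs_root] := hensel_step pq pr (ltn0Sn n) r_root'.
  have rs_red : zpmod n.+1 (r + s) = r.
    by rewrite -[RHS]r_red; apply: zpmod_eq; rewrite addrAC subrr add0r.
  exists (zpmod n.+2 (r + s)); rewrite zpmodS; split=> //; split.
  - exact: zpmod_mod.
  - rewrite (_ : _ - _ = (zpmod n.+2 (r + s) ^+ q - (r + s) ^+ q)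
                         + ((r + s) ^+ q - pval B n.+2)); last by ring.
    by rewrite rpredD // dvdz_subXX // dvdz_zpmod.
  - by rewrite zpmod_le // -r_c -[in RHS]rs_red zpmod_le.
have [x hx] := padic_of_lifts G1 G_lift.
exists x; apply: padic_eq => -[|n]; first by rewrite !pval_at0.
have [_ xn _] := hx n.
by rewrite pvalX -(pval_red B) (zpmod_eq xn).
Qed.

Local Notation K := (Qp p).

Lemma natr_Qp_neq0 n : n.+1%:R != 0 :> K.
Proof.
have -> : n.+1%:R = (n.+1%:R : R)%:F :> K by rewrite rmorph_nat.
rewrite tofrac_eq0; apply/eqP.
move/(congr1 (fun x : R => pval x n.+1)); rewrite pval_nat pval_zero zpmodE modz_small //.
by rewrite ltz_nat ltn_expl ?prime_gt1.
Qed.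

(* Any exponent q > 1 prime to p would do. *)
Definition hensel_exp : nat := if p == 2%N then 3 else 2.
Local Notation q := hensel_exp.

Lemma hensel_exp_ndvd : ~~ (p %| q)%N.
Proof.
rewrite /hensel_exp; case: eqP => [->|p2] //.
apply/negP => /(dvdn_leq (isT : (0 < 2)%N)); have := prime_gt1 p_prime; lia.
Qed.

Lemma hensel_exp_gt1 : (1 < q)%N.
Proof. by rewrite /hensel_exp; case: eqP. Qed.

(* The image of Z_p in Q_p, described without inverting the units of Z_p. *)
Definition in_Zp (z : K) := exists a b : R, has_val 0 b /\ z = a%:F / b%:F.

Lemma in_Zp_tofrac a : in_Zp a%:F.
Proof. by exists a, 1; split; [exact: has_val1 | rewrite tofrac1 divr1]. Qed.

Lemma in_Zp_root z : in_Zp z -> exists y : K, y ^+ q = 1 + p%:R * z ^+ q.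
Proof.
case=> a [b [b_unit ->]].
have bF : b%:F != 0 :> K by rewrite tofrac_eq0 (has_val_neq0 b_unit).
have [|r hr] := @hensel_root q (b ^+ q + p%:R * a ^+ q) b hensel_exp_ndvd b_unit.2.
  by rewrite addrAC subrr add0r pval_eq0Mr //; case: has_val_p.
exists (r%:F / b%:F).
rewrite exprMn exprVn -tofracXn hr tofracD tofracM !tofracXn rmorph_nat.
by rewrite mulrDl divff ?expf_neq0 // -mulrA exprMn exprVn.
Qed.

Lemma frac_in_Zp i j (a b : R) : has_val i a -> has_val j b -> (j <= i)%N ->
  in_Zp (a%:F / b%:F).
Proof.
move=> ha hb ji.
have [a' ->] := padic_dvd_expp (pval_eq0_le ji ha.1).
have [b' eb] := padic_dvd_expp hb.1.
have b'0 : b' != 0 by apply: contraNneq (has_val_neq0 hb) => b'0; rewrite eb b'0 mulr0.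
have [k hk] := has_val_exists b'0.
have k0 : k = 0%N.
  by have := has_valM (has_val_expp j) hk; rewrite -eb => /(has_val_uniq hb); lia.
rewrite k0 in hk; exists a', b'; split=> //.
have pjF : (p%:R ^+ j : R)%:F != 0 :> K by rewrite tofrac_eq0 (has_val_neq0 (has_val_expp j)).
by rewrite eb !tofracM invfM mulrACA divff ?mul1r.
Qed.

Lemma has_val_hensel_sum i j (a b : R) : has_val i a -> has_val j b -> (i < j)%N ->
  has_val (1 + i * q) (b ^+ q + p%:R * a ^+ q).
Proof.
move=> ha hb ij; rewrite addrC; apply: has_valDr (has_valM has_val_p (has_valX q ha)) _.
by apply: pval_eq0_le (has_valX q hb).1; have := hensel_exp_gt1; nia.
Qed.

Lemma root_in_Zp z : (exists y : K, y ^+ q = 1 + p%:R * z ^+ q) -> in_Zp z.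
Proof.
case=> y hy; have [a [b [b0 ez]]] := fraction_numden z.
have [c [d [d0 ey]]] := fraction_numden y.
have [a0|a0] := eqVneq a 0; first by rewrite ez a0 tofrac0 mul0r -tofrac0; apply: in_Zp_tofrac.
have [i ha] := has_val_exists a0; have [j hb] := has_val_exists b0.
have [ji|ij] := leqP j i; first by rewrite ez; apply: frac_in_Zp ha hb ji.
have cleared : c ^+ q * b ^+ q = d ^+ q * (b ^+ q + p%:R * a ^+ q).
  apply/eqP; rewrite -(tofrac_eq (R:=R)); apply/eqP.
  rewrite !(tofracM, tofracD, tofracXn) rmorph_nat; apply: clear_denoms_root.
  - by rewrite expf_neq0 ?tofrac_eq0.
  - by rewrite expf_neq0 ?tofrac_eq0.
  by rewrite -!expr_div_n -ey -ez.
have hS := has_val_hensel_sum ha hb ij.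
have c0 : c != 0.
  have cq0 : c ^+ q * b ^+ q != 0 by rewrite cleared mulf_neq0 ?expf_neq0 ?(has_val_neq0 hS).
  apply: contraNneq cq0 => ->; rewrite mulf_eq0 expf_eq0 eqxx andbT.
  by rewrite (ltnW hensel_exp_gt1).
(* The valuations of the two sides of [cleared] differ modulo q. *)
have [k hc] := has_val_exists c0; have [l hd] := has_val_exists d0.
have := has_valM (has_valX q hc) (has_valX q hb); rewrite cleared.
move/has_val_uniq/(_ (has_valM (has_valX q hd) hS)) => val_eq.
have : ((k + j) * q %% q = ((l + i) * q + 1) %% q)%N by congr (_ %% _)%N; lia.
by rewrite modnMl modnMDl modn_small // hensel_exp_gt1.
Qed.

Lemma in_ZpP z : in_Zp z <-> exists y : K, y ^+ q = 1 + p%:R * z ^+ q.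
Proof. by split; [apply: in_Zp_root | apply: root_in_Zp]. Qed.

Section Endomorphism.
Variable g : {rmorphism K -> K}.

Lemma rmorph_in_Zp z : in_Zp z -> in_Zp (g z).
Proof.
move=> /in_ZpP[y hy]; apply/in_ZpP; exists (g y).
by rewrite -rmorphXn hy rmorphD rmorph1 rmorphM rmorphXn rmorph_nat.
Qed.

Lemma rmorph_tofrac a : g a%:F = a%:F.
Proof.
have [e [u [u_unit ga]]] := rmorph_in_Zp (in_Zp_tofrac a).
have uF : u%:F != 0 :> K by rewrite tofrac_eq0 (has_val_neq0 u_unit).
suff eua : e = u * a by rewrite ga eua tofracM mulrAC divff ?mul1r.
apply/eqP; rewrite -subr_eq0; apply/eqP; apply: padic_eq0 => n.
(* With a = a_n + p^n c, g a = a_n + p^n g c and g c lies in Z_p, so e = u a mod p^n. *)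
have [c ac] := padic_int_approx a n; set an := pval a n in ac.
have [c' [c'' [c''_unit gc]]] := rmorph_in_Zp (in_Zp_tofrac c).
have c''F : c''%:F != 0 :> K by rewrite tofrac_eq0 (has_val_neq0 c''_unit).
have ga' : e%:F / u%:F = an%:~R + p%:R ^+ n * (c'%:F / c''%:F) :> K.
  rewrite -ga -gc {1}ac !(tofracD, tofracM, tofracXn) rmorphD rmorphM rmorphXn.
  by rewrite !rmorph_int !rmorph_nat.
have cleared : (e - u * an%:~R) * c'' = p%:R ^+ n * (u * c').
  apply/eqP; rewrite -(tofrac_eq (R:=R)); apply/eqP.
  rewrite !(tofracM, tofracB, tofracXn) !rmorph_int !rmorph_nat.
  exact: clear_denoms_approx.
have e_an : pval (e - u * an%:~R) n = 0.
  apply: pval_eq0_cancel c''_unit.2 _; rewrite cleared.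
  by apply: pval_eq0Mr; case: (has_val_expp n).
have -> : e - u * a = (e - u * an%:~R) - u * (p%:R ^+ n * c) by rewrite {1}ac; ring.
by apply/pval_eq0D/pval_eq0N/pval_eq0Ml/pval_eq0Mr => //; case: (has_val_expp n).
Qed.

Lemma Qp_rmorph_id : g =1 id.
Proof.
move=> z; have [a [b [_ ->]]] := fraction_numden z.
by rewrite fmorph_div !rmorph_tofrac.
Qed.
End Endomorphism.

End Padic.

Theorem theoremA1 (p : nat) (hp : prime p) :
  forall f : Qp p -> Qp p, SD f <-> f = id.
Proof.
move=> f; split=> [[f_SD _]|->]; last by split=> [x y xy|z]; [split | exists z].
have [g ->] := SD_map_rmorphism (natr_Qp_neq0 hp 1) (natr_Qp_neq0 hp 2)
  (natr_Qp_neq0 hp 4) f_SD.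
exact: funext (Qp_rmorph_id hp g).
Qed.
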